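(* Let $M\in\overline{ARI}$ be polynomial-valued. Then $swap\big(\overline{ganit}(poc)\cdot M\big)\in ARI^\Delta$.
   Context: $ARI$ (resp. $\overline{ARI}$) is the space of moulds $A=(A^r)_{r\ge0}$ with $A^r\in\mathbb{Q}(u_1,\dots,u_r)$ (resp. $\mathbb{Q}(v_1,\dots,v_r)$) and $A^0=0$. $swap:\overline{ARI}\to ARI$ is $swap(C)(u_1,\dots,u_r)=C(u_1+\dots+u_r,u_1+\dots+u_{r-1},\dots,u_1)$. $ARI^\Delta$ is the set of $A\in ARI$ such that $u_1\cdots u_r(u_1+\dots+u_r)A(u_1,\dots,u_r)$ is a polynomial for every $r\ge1$. $poc(v_1,\dots,v_r)=\frac{1}{v_1(v_1-v_2)\cdots(v_{r-1}-v_r)}$, $poc(\emptyset)=1$. $(\overline{ganit}(Q)\cdot T)(v_1,\dots,v_r)=\sum Q(\lfloor\mathbf b_1)\cdots Q(\lfloor\mathbf b_s)T(\mathbf a_1\cdots\mathbf a_s)$, summed over all decompositions of $(v_1,\dots,v_r)$ into consecutive chunks $\mathbf a_1\mathbf b_1\cdots\mathbf a_s\mathbf b_s$ ($s\ge1$, all nonempty except possibly $\mathbf b_s$), with $\mathbf a_1\cdots\mathbf a_s$ the concatenation, $\lfloor\mathbf b_i=(v_k-v_{k-1},v_{k+1}-v_{k-1},\dots,v_{k+l}-v_{k-1})$ for $\mathbf b_i=(v_k,\dots,v_{k+l})$, and $\lfloor\emptyset=\emptyset$. *)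

From HB Require Import structures.
From mathcomp Require Import all_boot all_order all_algebra.
From mathcomp Require Import generic_quotient fraction.
From mathcomp Require Import mpoly.
Set Implicit Arguments. Unset Strict Implicit. Unset Printing Implicit Defensive.
Import Order.TTheory GRing.Theory Num.Theory.
Local Open Scope ring_scope.

(* The field Q(x_1,...,x_r) of rational functions in r variables
   (variables indexed 'X_0, ..., 'X_(r-1)). *)
Definition Qfrac (r : nat) := {fraction {mpoly rat[r]}}.

Definition vars (r : nat) : seq (Qfrac r) :=
  [seq tofrac ('X_i : {mpoly rat[r]}) | i <- enum 'I_r].

Definition pocden (F : fieldType) (w : seq F) : F :=
  match w with
  | [::] => 1
  | x :: s => x * \prod_(d <- pairmap (fun a b => a - b) x s) d
  end.
Definition poc (F : fieldType) (w : seq F) : F := (pocden w)^-1.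

(* the "floor" operation: given the (nonempty) chunk a preceding the chunk b,
   lfloor a b = (b_1 - last a, ..., b_l - last a); lfloor a [::] = [::]. *)
Definition lfloor (F : fieldType) (a b : seq F) : seq F :=
  [seq x - last 0 a | x <- b].

(* ganit_aux Q T n acc w : sum over all decompositions w = a_1 b_1 ... a_s b_s
   (s >= 1, all chunks nonempty except possibly b_s) of
   Q(lfloor b_1) ... Q(lfloor b_s) T(acc ++ a_1 ... a_s);  n is fuel. *)
Fixpoint ganit_aux (F : fieldType) (Q T : seq F -> F) (n : nat) (acc w : seq F)
    : F :=
  match n with
  | 0 => 0
  | n'.+1 =>
    \sum_(1 <= i < (size w).+1) \sum_(0 <= j < (size w - i).+1)
      let a := take i w in
      let b := take j (drop i w) in
      let rest := drop (i + j) w in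
      if rest == [::] then Q (lfloor a b) * T (acc ++ a)
      else if j == 0%N then 0
      else Q (lfloor a b) * ganit_aux Q T n' (acc ++ a) rest
  end.

Definition ganit_act (F : fieldType) (Q T : seq F -> F) (w : seq F) : F :=
  ganit_aux Q T (size w) [::] w.

(* A polynomial-valued mould M (M k in Q[v_1..v_k]) evaluated at a word w of
   elements of a field extension Q(x_1..x_r): M^{size w}(w). *)
Definition eval_mould (r : nat) (M : forall k : nat, {mpoly rat[k]})
    (w : seq (Qfrac r)) : Qfrac r :=
  mmap (fun c : rat => tofrac (c%:MP : {mpoly rat[r]}))
       (fun i : 'I_(size w) => nth 0 w i) (M (size w)).

(* the component of length r of the mould ganit(poc) . M, an element of
   Q(v_1,...,v_r) *)
Definition ganit_poc_M (M : forall k : nat, {mpoly rat[k]}) (r : nat)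
    : Qfrac r :=
  ganit_act (@poc _) (eval_mould M) (vars r).

(* swap on a rational function C(v_1..v_r):
   swap(C)(u_1..u_r) = C(u_1+...+u_r, u_1+...+u_{r-1}, ..., u_1),
   computed by substituting in numerator and denominator of a representative. *)
Definition swap_lin (r : nat) : r.-tuple {mpoly rat[r]} :=
  [tuple \sum_(j < r | (j < r - i)%N) 'X_j | i < r].

Definition swapF (r : nat) (C : Qfrac r) : Qfrac r :=
  let x := repr C in
  tofrac (\n_x \mPo swap_lin r) / tofrac (\d_x \mPo swap_lin r).

Definition ARI_Delta (A : forall r : nat, Qfrac r) : Prop :=
  forall r : nat, (0 < r)%N ->
    exists P : {mpoly rat[r]},
      tofrac ((\prod_(i < r) 'X_i) * (\sum_(i < r) 'X_i) : {mpoly rat[r]})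
        * A r = tofrac P.

(* Put dprod(w) = (w_1 - w_2) ... (w_(k-1) - w_k), so that 1/poc(w) = w_1 dprod(w) and
   1/poc(lfloor a b) = - dprod(last a :: b).  Along a decomposition w = a_1 b_1 ... a_s b_s,
   dprod(w) splits into the dprod of each a_i, the dprod of each (last a_i :: b_i), and the
   differences across the boundaries b_i | a_(i+1); the factors of the second kind cancel
   the poc(lfloor a_i b_i) up to sign.  Hence dprod(v) (ganit(poc).M)(v) is a polynomial.
   Under swap, v_i - v_(i+1) becomes u_(r-i+1) and v_r becomes u_1, so
   swap(dprod(v)) u_1 = u_1 ... u_r. *)

From mathcomp Require Import all_boot all_algebra.
From mathcomp Require Import generic_quotient fraction.
From mathcomp Require Import mpoly.
From mathcomp Require Import ring zify.
Set Implicit Arguments. Unset Strict Implicit. Unset Printing Implicit Defensive.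
Import GRing.Theory.
Local Open Scope ring_scope.
Local Open Scope quotient_scope.

Lemma tofrac_repr (R : idomainType) (C : {fraction R}) :
  C = tofrac \n_(repr C) / tofrac \d_(repr C).
Proof.
rewrite -[LHS]reprK; move: (repr C) => x; unlock tofrac.
have -> : forall y, (\pi_{fraction R} y)^-1 = FracField.inv (\pi_{fraction R} y) by [].
rewrite -FracField.pi_inv.
have -> : forall y z, \pi_{fraction R} y * \pi_{fraction R} z =
    FracField.mul (\pi_{fraction R} y) (\pi_{fraction R} z) by [].
rewrite -FracField.pi_mul; apply/eqmodP.
rewrite /= FracField.equivfE /FracField.mulf /FracField.invf /=.
rewrite !numden_Ratio ?oner_neq0 ?mulr1 ?mul1r ?mulf_neq0 ?oner_neq0 ?denom_ratioP //.
by rewrite mulrC.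
Qed.

Section TofracImage.
Variable R : idomainType.

Definition is_tofrac (x : {fraction R}) : Prop := exists p, x = tofrac p.

Lemma is_tofrac_tofrac p : is_tofrac (tofrac p). Proof. by exists p. Qed.

Lemma is_tofrac0 : is_tofrac 0. Proof. by exists 0; rewrite tofrac0. Qed.

Lemma is_tofrac1 : is_tofrac 1. Proof. by exists 1; rewrite tofrac1. Qed.

Lemma is_tofracN x : is_tofrac x -> is_tofrac (- x).
Proof. by case=> p ->; exists (- p); rewrite tofracN. Qed.

Lemma is_tofracD x y : is_tofrac x -> is_tofrac y -> is_tofrac (x + y).
Proof. by case=> p -> [q ->]; exists (p + q); rewrite tofracD. Qed.

Lemma is_tofracB x y : is_tofrac x -> is_tofrac y -> is_tofrac (x - y).
Proof. by move=> px py; apply/is_tofracD/is_tofracN. Qed.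

Lemma is_tofracM x y : is_tofrac x -> is_tofrac y -> is_tofrac (x * y).
Proof. by case=> p -> [q ->]; exists (p * q); rewrite tofracM. Qed.

Lemma is_tofracX x k : is_tofrac x -> is_tofrac (x ^+ k).
Proof. by case=> p ->; exists (p ^+ k); rewrite tofracXn. Qed.

Lemma is_tofrac_sum (I : Type) (r : seq I) (P : pred I) (F : I -> {fraction R}) :
  (forall i, P i -> is_tofrac (F i)) -> is_tofrac (\sum_(i <- r | P i) F i).
Proof. by move=> PF; apply: big_ind => //; [exact: is_tofrac0 | exact: is_tofracD]. Qed.

Lemma is_tofrac_prod (I : Type) (r : seq I) (P : pred I) (F : I -> {fraction R}) :
  (forall i, P i -> is_tofrac (F i)) -> is_tofrac (\prod_(i <- r | P i) F i).
Proof. by move=> PF; apply: big_ind => //; [exact: is_tofrac1 | exact: is_tofracM]. Qed.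

Lemma is_tofrac_mulVf x : is_tofrac (x / x).
Proof.
by have [-> | /divff ->] := eqVneq x 0; [rewrite mul0r; exact: is_tofrac0 | exact: is_tofrac1].
Qed.

End TofracImage.

Definition dprod (R : ringType) (w : seq R) : R :=
  if w is x :: s then \prod_(d <- pairmap (fun a b => a - b) x s) d else 1.

Lemma dprod_seq1 (R : ringType) (x : R) : dprod [:: x] = 1.
Proof. exact: big_nil. Qed.

Lemma dprod_cons2 (R : ringType) (x y : R) s :
  dprod [:: x, y & s] = (x - y) * dprod (y :: s).
Proof. exact: big_cons. Qed.

Lemma dprod_cat (R : ringType) (a b : seq R) :
  a != [::] -> dprod (a ++ b) = dprod a * dprod (last 0 a :: b).
Proof. by case: a => [//|x s] _; rewrite /= pairmap_cat big_cat. Qed.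

Lemma rmorph_dprod (R S : ringType) (f : {rmorphism R -> S}) w :
  dprod (map f w) = f (dprod w).
Proof.
elim: w => [|x [|y s] IH]; rewrite ?rmorph1 ?dprod_seq1 ?rmorph1 //.
by rewrite map_cons map_cons !dprod_cons2 rmorphM rmorphB -IH.
Qed.

Lemma dprod_iota (R : ringType) (f : nat -> R) m k :
  dprod (map f (iota m k.+1)) = \prod_(i < k) (f (m + i)%N - f (m + i).+1).
Proof.
elim: k m => [|k IH] m; first by rewrite big_ord0 dprod_seq1.
rewrite [iota _ _]/= map_cons map_cons dprod_cons2 -map_cons IH big_ord_recl addn0.
by congr (_ * _); apply: eq_bigr => i _; rewrite addSnnS.
Qed.

Lemma pocden_lfloor (F : fieldType) (a b : seq F) :
  pocden (lfloor a b) = if b is [::] then 1 else - dprod (last 0 a :: b).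
Proof.
case: b => [//|y t]; rewrite /lfloor /= big_cons -mulNr opprB; congr (_ * _).
elim: t y => [//|z t IH] y /=.
by rewrite !big_cons IH opprB addrA subrK.
Qed.

Section GanitTimesDprod.
Variables (R : idomainType) (T : seq {fraction R} -> {fraction R}).
Local Notation all_tofrac s := {in s, forall x : {fraction R}, is_tofrac x}.
Hypothesis T_tofrac : forall s, all_tofrac s -> is_tofrac (T s).

Lemma is_tofrac_last (x : {fraction R}) s :
  is_tofrac x -> all_tofrac s -> is_tofrac (last x s).
Proof. by move=> x_T s_T; have /predU1P[-> //|/s_T] := mem_last x s. Qed.

Lemma is_tofrac_dprod w : all_tofrac w -> is_tofrac (dprod w).
Proof.
elim: w => [|x [|y s] IH] w_T; rewrite ?dprod_seq1; try exact: is_tofrac1.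
rewrite dprod_cons2; apply: is_tofracM.
  by apply: is_tofracB; apply: w_T; rewrite !inE eqxx ?orbT.
by apply: IH => z z_s; apply: w_T; rewrite inE z_s orbT.
Qed.

(* The product is 1 or -1, or 0 when dprod vanishes and poc takes the junk value 0^-1 = 0. *)
Lemma is_tofrac_dprod_poc_lfloor (a b : seq {fraction R}) :
  is_tofrac (dprod (last 0 a :: b) * poc (lfloor a b)).
Proof.
rewrite /poc pocden_lfloor; case: b => [|y t].
  by rewrite dprod_seq1 invr1 mulr1; exact: is_tofrac1.
by rewrite invrN mulrN; apply/is_tofracN/is_tofrac_mulVf.
Qed.

Lemma is_tofrac_ganit_last_term acc a b :
    a != [::] -> all_tofrac acc -> all_tofrac a -> all_tofrac b ->
  is_tofrac (dprod (a ++ b) * (poc (lfloor a b) * T (acc ++ a))).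
Proof.
move=> a_nil acc_T a_T b_T; rewrite dprod_cat // mulrA -(mulrA (dprod a)).
apply: is_tofracM; last by apply: T_tofrac => x; rewrite mem_cat => /orP[/acc_T|/a_T].
by apply: is_tofracM; [exact: is_tofrac_dprod | exact: is_tofrac_dprod_poc_lfloor].
Qed.

Lemma is_tofrac_ganit_inner_term a b z t G :
    a != [::] -> all_tofrac a -> all_tofrac b -> is_tofrac z ->
    is_tofrac (dprod (z :: t) * G) ->
  is_tofrac (dprod (a ++ b ++ z :: t) * (poc (lfloor a b) * G)).
Proof.
move=> a_nil a_T b_T z_T zG_T.
rewrite dprod_cat // -cat_cons dprod_cat // dprod_cons2.
have -> : forall dA dB y dZ P : {fraction R},
    dA * (dB * (y * dZ)) * (P * G) = dA * (dB * P) * y * (dZ * G).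
  by move=> *; ring.
have last_T : is_tofrac (last (last 0 a) b).
  by apply: is_tofrac_last b_T; apply: is_tofrac_last a_T; exact: is_tofrac0.
apply: is_tofracM => //; apply: is_tofracM; last exact: is_tofracB.
by apply: is_tofracM; [exact: is_tofrac_dprod | exact: is_tofrac_dprod_poc_lfloor].
Qed.

Lemma is_tofrac_dprod_mul_ganit_aux n acc w : all_tofrac acc -> all_tofrac w ->
  is_tofrac (dprod w * ganit_aux (@poc _) T n acc w).
Proof.
elim: n acc w => [|n IH] acc w acc_T w_T /=; first by rewrite mulr0; exact: is_tofrac0.
rewrite mulr_sumr big_nat_cond; apply: is_tofrac_sum => i /andP[/andP[i_gt0 i_le] _].
rewrite mulr_sumr; apply: is_tofrac_sum => j _.
have w_abc : w = take i w ++ take j (drop i w) ++ drop (i + j) w.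
  by rewrite addnC -drop_drop !cat_take_drop.
have a_nil : take i w != [::] by rewrite -size_eq0 size_takel -?lt0n // -ltnS.
have a_T : all_tofrac (take i w) by move=> x /mem_take/w_T.
have b_T : all_tofrac (take j (drop i w)) by move=> x /mem_take/mem_drop/w_T.
have c_T : all_tofrac (drop (i + j) w) by move=> x /mem_drop/w_T.
rewrite {1}w_abc; move: (take i w) (take j (drop i w)) (drop (i + j) w) a_nil a_T b_T c_T.
move=> a b c a_nil a_T b_T c_T.
case: eqP => [-> | c_nil]; first by rewrite cats0; exact: is_tofrac_ganit_last_term.
case: eqP => _; first by rewrite mulr0; exact: is_tofrac0.
case: c c_T c_nil => [//|z t] c_T _.
apply: is_tofrac_ganit_inner_term => //; first by apply: c_T; exact: mem_head.
by apply: IH => // x; rewrite mem_cat => /orP[/acc_T|/a_T].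
Qed.

End GanitTimesDprod.

Lemma tofrac_mul_map_repr (R S : idomainType) (f : {rmorphism R -> S})
    (C : {fraction R}) (D P : R) :
  tofrac D * C = tofrac P ->
  exists Q, tofrac (f D) * (tofrac (f \n_(repr C)) / tofrac (f \d_(repr C))) = tofrac Q.
Proof.
have d_neq0 : tofrac \d_(repr C) != 0 by rewrite tofrac_eq0 denom_ratioP.
rewrite {1}[C]tofrac_repr => /(congr1 (fun x => x * tofrac \d_(repr C))).
rewrite -mulrA divfK // -!tofracM => /eqP; rewrite tofrac_eq => /eqP DnPd.
(* f d = 0 cannot happen for the swap, but the junk value 0 would do as well. *)
have [fd0 | fd_neq0] := eqVneq (f \d_(repr C)) 0.
  by exists 0; rewrite fd0 tofrac0 invr0 !mulr0.
exists (f P); rewrite mulrA -tofracM -rmorphM DnPd rmorphM tofracM.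
by rewrite mulfK // tofrac_eq0.
Qed.

Lemma is_tofrac_eval_mould r (M : forall k, {mpoly rat[k]}) (s : seq (Qfrac r)) :
  {in s, forall x, is_tofrac x} -> is_tofrac (eval_mould M s).
Proof.
move=> s_T; apply: is_tofrac_sum => m _.
apply: is_tofracM; first exact: is_tofrac_tofrac.
by apply: is_tofrac_prod => i _; apply/is_tofracX/s_T/mem_nth.
Qed.

Section SwapVars.
Variable n : nat.
Local Notation r := n.+1.

Definition swap_var (k : nat) : {mpoly rat[r]} := \sum_(j < r | (j < r - k)%N) 'X_j.

Lemma comp_swap_linX (i : 'I_r) : 'X_i \mPo swap_lin r = swap_var i.
Proof. by rewrite comp_mpolyXU -tnth_nth tnth_mktuple. Qed.

Lemma swap_varB k : (k < n)%N -> swap_var k - swap_var k.+1 = 'X_(inord (n - k)).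
Proof.
move=> lt_kn; rewrite /swap_var (bigD1 (inord (n - k))) /=; last by rewrite inordK; lia.
rewrite (eq_bigl (fun j : 'I_r => (j < r - k.+1)%N)) ?addrK // => j.
by rewrite -val_eqE /= inordK; [apply/idP/idP; lia | lia].
Qed.

Lemma swap_dprod_vars :
  (dprod [seq 'X_i | i <- enum 'I_r] \mPo swap_lin r) * 'X_ord0 = \prod_(i < r) 'X_i.
Proof.
rewrite -(rmorph_dprod (comp_mpoly (swap_lin r))) -map_comp.
rewrite (eq_map (g := swap_var \o val)) => [|i]; last exact: comp_swap_linX.
rewrite map_comp val_enum_ord dprod_iota big_ord_recl mulrC.
rewrite (eq_bigr (fun i : 'I_n => 'X_(inord (n - i)))) => [|i _];
  last by rewrite add0n swap_varB.
rewrite (reindex_inj rev_ord_inj); congr (_ * _); apply: eq_bigr => i _.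
congr (mpolyX _ U_(_))%MM; apply: val_inj; rewrite /= inordK /bump /=; have := ltn_ord i; lia.
Qed.

End SwapVars.

Theorem lemma33 (M : forall k : nat, {mpoly rat[k]}) (hM0 : M 0%N = 0) :
  ARI_Delta (fun r => swapF (ganit_poc_M M r)).
Proof.
move=> [//|n] _.
set Xs := [seq ('X_i : {mpoly rat[n.+1]}) | i <- enum 'I_n.+1].
have [P dprodG] : is_tofrac (tofrac (dprod Xs) * ganit_poc_M M n.+1).
  rewrite -rmorph_dprod -map_comp; apply: is_tofrac_dprod_mul_ganit_aux => //.
    exact: is_tofrac_eval_mould.
  by move=> x /mapP[i _ ->]; exact: is_tofrac_tofrac.
have [Q swapG] := tofrac_mul_map_repr (comp_mpoly (swap_lin n.+1)) dprodG.
exists ('X_ord0 * (\sum_(i < n.+1) 'X_i) * Q).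
by rewrite -swap_dprod_vars !tofracM -swapG /swapF; ring.
Qed.
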